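(* Let $a\in\mathbb{Q}\setminus\{-1,0,1\}$ and let $z\in\mathbb{C}$ with $|z|\le1$. For any positive real numbers $\xi<x$, \begin{multline*} \sum_{\substack{p\le x \\ \nu_p(a)=0}} z^{\omega((p-1)/\mathrm{ord}_p(a))} = \sum_{\ell\mid Q_\xi} \mu^2(\ell) (z-1)^{\omega(\ell)} \#\{ p\le x : \nu_p(a)=0,\ \ell \mid (p-1)/\mathrm{ord}_p(a) \} \\ + O\biggl( \sum_{\xi<q\le x} \#\{ p\le x : \nu_p(a)=0,\ q \mid (p-1)/\mathrm{ord}_p(a) \} \biggr), \end{multline*} with an absolute implied constant.
   Context: $p,q$ denote primes. $\nu_p(a)$ is the $p$-adic valuation of $a$; $\mathrm{ord}_p(a)$ is the multiplicative order of $a$ mod $p$; $\omega(n)$ is the number of distinct prime factors; $\mu$ is the Möbius function. For $\xi>0$, $Q_\xi$ is the least common multiple of all positive integers $\le\xi$. The convention $0^0=1$ is used. *)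

From HB Require Import structures.
From mathcomp Require Import all_boot all_order all_algebra.
From mathcomp Require Import reals.
From mathcomp Require Import complex.
Set Implicit Arguments. Unset Strict Implicit. Unset Printing Implicit Defensive.
Import Order.TTheory GRing.Theory Num.Theory.
Local Open Scope ring_scope.

Definition nu (p : nat) (a : rat) : int :=
  (logn p `|numq a|%N)%:Z - (logn p `|denq a|%N)%:Z.

(* Multiplicative order of a modulo p: the least k >= 1 with a^k = 1 mod p,
   i.e. numq a ^ k = denq a ^ k (mod p).  When nu p a = 0 such k exists and
   k <= p - 1 (Fermat), so the search over 1..p is exhaustive. *)
Definition ordp (p : nat) (a : rat) : nat :=
  (find (fun k : nat => ((numq a) ^+ k.+1 == (denq a) ^+ k.+1 %[mod p%:Z])%Z)
        (iota 0 p)).+1.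

Definition omega (n : nat) : nat := size (primes n).

Definition squarefree (n : nat) : bool := (0 < n)%N && all (fun q => logn q n == 1%N) (primes n).
Definition mobius (n : nat) : int :=
  if squarefree n then (-1) ^+ omega n else 0.

Definition Qxi (R : realType) (xi : R) : nat :=
  \big[lcmn/1%N]_(1 <= k < (Num.truncn xi).+1) k.

Definition idx (p : nat) (a : rat) : nat := (p.-1 %/ ordp p a)%N.

Definition cnt (R : realType) (x : R) (a : rat) (l : nat) : nat :=
  \sum_(p < (Num.truncn x).+1 | [&& prime p, p%:R <= x, nu p a == 0
                                    & (l %| idx p a)%N]) 1%N.

Definition lhs (R : realType) (x : R) (a : rat) (z : R[i]) : R[i] :=
  \sum_(p < (Num.truncn x).+1 | [&& prime p, p%:R <= x & nu p a == 0])
     z ^+ omega (idx p a).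

Definition mainterm (R : realType) (xi x : R) (a : rat) (z : R[i]) : R[i] :=
  \sum_(l <- divisors (Qxi xi))
     ((mobius l) ^+ 2)%:~R * (z - 1) ^+ omega l * (cnt x a l)%:R.

Definition errterm (R : realType) (xi x : R) (a : rat) : nat :=
  \sum_(q < (Num.truncn x).+1 | [&& prime q, xi < q%:R & q%:R <= x])
     cnt x a q.

From HB Require Import structures.
From mathcomp Require Import all_boot all_order all_algebra.
From mathcomp Require Import reals.
From mathcomp Require Import complex.
Import Order.TTheory GRing.Theory Num.Theory.
Local Open Scope ring_scope.
Set Implicit Arguments. Unset Strict Implicit. Unset Printing Implicit Defensive.

(** For a prime p with nu_p(a) = 0 put n = (p-1)/ord_p(a); Fermat's little
    theorem gives ord_p(a) <= p-1, hence 0 < n < p.  The divisor-sum identity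
    sum_(d | m) mu(d)^2 w^omega(d) = (1+w)^omega(m), with w = z-1 and
    m = gcd(n, Q_xi), turns the contribution of p to the main term into
    z^omega(gcd(n, Q_xi)).  Every prime q <= xi divides Q_xi, so this equals
    z^omega(n) unless some prime q > xi divides n; then q <= n < p <= x, so p
    is counted in the error term, while the difference is at most 2 in
    modulus.  Hence one can take K = 2. *)

Lemma fermat_littlez (p : nat) (x : int) :
  prime p -> ~~ (p%:Z %| x)%Z -> (x ^+ p.-1 = 1 %[mod p])%Z.
Proof.
move=> p_pr p_ndvd_x.
have xp_eq_x : (x ^+ p = x %[mod p])%Z.
  have p_neq0 : p%:Z != 0 by rewrite eqz_nat -lt0n prime_gt0.
  rewrite -modzXm -[in RHS]modz_mod.
  have := modz_ge0 x p_neq0; case: (x %% p)%Z => // n _.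
  by rewrite -!natz -natrX !natz !modz_nat (fermat_little n p_pr).
apply/eqP; rewrite eqz_mod_dvd.
move/eqP: xp_eq_x; rewrite eqz_mod_dvd.
have -> : x ^+ p - x = x * (x ^+ p.-1 - 1).
  by rewrite mulrBr mulr1 -exprS prednK ?prime_gt0.
by rewrite Gauss_dvdzr // coprimezE prime_coprime.
Qed.

Lemma nu_eq0_ndvd (p : nat) (a : rat) : prime p -> a != 0 -> nu p a = 0 ->
  ~~ (p%:Z %| numq a)%Z /\ ~~ (p%:Z %| denq a)%Z.
Proof.
move=> p_pr a_neq0 /eqP; rewrite /nu subr_eq0 eqz_nat => /eqP logn_eq.
have dvdz_logn (n : int) : n != 0 -> (p%:Z %| n)%Z = (0 < logn p `|n|)%N.
  by move=> n_neq0; rewrite logn_gt0 mem_primes p_pr absz_gt0 n_neq0.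
have not_both : ~~ ((p%:Z %| numq a) && (p%:Z %| denq a))%Z.
  rewrite !dvdzE -dvdn_gcd (eqP (coprime_num_den a)) dvdn1.
  by rewrite neq_ltn prime_gt1 ?orbT.
move: not_both; rewrite !dvdz_logn ?numq_eq0 ?denq_eq0 // logn_eq andbb.
by split.
Qed.

Lemma ordp_le_pred (p : nat) (a : rat) : prime p ->
  ~~ (p%:Z %| numq a)%Z -> ~~ (p%:Z %| denq a)%Z -> (ordp p a <= p.-1)%N.
Proof.
move=> p_pr p_ndvd_num p_ndvd_den.
have pred2 : p.-2.+1 = p.-1 by case: (p) (prime_gt1 p_pr) => [|[|]].
rewrite /ordp; apply: find_ltn; rewrite take_iota; apply/hasP; exists p.-2.
  by rewrite mem_iota (minn_idPl (leq_pred p)) add0n ltn_predL -pred2.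
by rewrite /= pred2 (fermat_littlez p_pr p_ndvd_num) (fermat_littlez p_pr p_ndvd_den).
Qed.

Lemma idx_bounds (p : nat) (a : rat) : prime p -> a != 0 -> nu p a = 0 ->
  (0 < idx p a < p)%N.
Proof.
move=> p_pr a_neq0 nu_eq0.
have [p_ndvd_num p_ndvd_den] := nu_eq0_ndvd p_pr a_neq0 nu_eq0.
have ordp_le := ordp_le_pred p_pr p_ndvd_num p_ndvd_den.
rewrite /idx divn_gt0 // ordp_le /=.
by rewrite (leq_ltn_trans (leq_div _ _)) // prednK ?prime_gt0.
Qed.

Lemma squarefreeP n : reflect (0 < n /\ forall q, logn q n <= 1)%N (squarefree n).
Proof.
apply: (iffP andP) => -[n_gt0 logn_n]; split=> //.
  move=> q; have [q_n | ] := boolP (q \in primes n).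
    by rewrite (eqP (allP logn_n q q_n)).
  by rewrite -logn_gt0 -leqNgt => /leq_trans->.
by apply/allP => q q_n; rewrite eqn_leq logn_n logn_gt0.
Qed.

Lemma squarefreeMp p e : prime p -> (0 < e)%N ->
  squarefree (e * p) = ~~ (p %| e)%N && squarefree e.
Proof.
move=> p_pr e_gt0; have p_gt0 := prime_gt0 p_pr.
have lognMp q : logn q (e * p) = (logn q e + (q == p))%N.
  by rewrite lognM // (logn_prime _ p_pr).
have p_dvd_logn : (p %| e)%N = (0 < logn p e)%N.
  by rewrite logn_gt0 mem_primes p_pr e_gt0.
apply/squarefreeP/andP => [[_ logn_le1] | [p_ndvd /squarefreeP[_ logn_le1]]].
  split; first by have := logn_le1 p; rewrite lognMp eqxx addn1 ltnS p_dvd_logn -leqNgt.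
  apply/squarefreeP; split=> // q; apply: leq_trans (logn_le1 q).
  by rewrite lognMp leq_addr.
split=> [|q]; first by rewrite muln_gt0 e_gt0.
rewrite lognMp; have [->|_] := eqVneq q p; last by rewrite addn0.
by move: p_ndvd; rewrite p_dvd_logn -leqNgt leqn0 => /eqP ->.
Qed.

Lemma coprime_prime_gt0 p m : prime p -> coprime p m -> (0 < m)%N.
Proof. by move=> p_pr; case: m => //; rewrite prime_coprime ?dvdn0. Qed.

Lemma omegaM_pexp p m k : prime p -> coprime p m -> (0 < k)%N ->
  omega (m * p ^ k) = (omega m).+1.
Proof.
move=> p_pr cop_pm k_gt0; have m_gt0 := coprime_prime_gt0 p_pr cop_pm.
rewrite /omega -[(size (primes m)).+1]/(size (p :: primes m)).
apply: perm_size; apply: uniq_perm; rewrite ?primes_uniq //=.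
  by rewrite primes_uniq andbT mem_primes p_pr m_gt0 -prime_coprime.
have pk_gt0 : (0 < p ^ k)%N by rewrite expn_gt0 prime_gt0.
by move=> q; rewrite primesM // primesX // (primes_prime p_pr) !inE orbC.
Qed.

Lemma perm_divisorsM_pexp_ndvd p m k : prime p -> coprime p m ->
  perm_eq [seq d <- divisors (m * p ^ k) | ~~ (p %| d)%N] (divisors m).
Proof.
move=> p_pr cop_pm; have m_gt0 := coprime_prime_gt0 p_pr cop_pm.
have mpk_gt0 : (0 < m * p ^ k)%N by rewrite muln_gt0 m_gt0 expn_gt0 prime_gt0.
apply: uniq_perm; rewrite ?filter_uniq ?divisors_uniq // => d.
rewrite mem_filter -!dvdn_divisors //.
apply/andP/idP => [[p_ndvd_d] | d_dvd_m].
  by rewrite Gauss_dvdl // coprimeXr // coprime_sym prime_coprime.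
rewrite dvdn_mulr //; split=> //; apply: contraL cop_pm => p_dvd_d.
by rewrite prime_coprime // negbK (dvdn_trans p_dvd_d).
Qed.

Lemma perm_divisorsMp_dvd p n : (0 < p)%N -> (0 < n)%N ->
  perm_eq [seq d <- divisors (n * p) | (p %| d)%N] [seq e * p | e <- divisors n]%N.
Proof.
move=> p_gt0 n_gt0; have np_gt0 : (0 < n * p)%N by rewrite muln_gt0 n_gt0.
apply: uniq_perm; rewrite ?filter_uniq ?divisors_uniq //.
  have mulIp : injective (muln^~ p) by move=> x y /eqP; rewrite eqn_pmul2r // => /eqP.
  by rewrite (map_inj_uniq mulIp) divisors_uniq.
move=> d; rewrite mem_filter -dvdn_divisors //; apply/andP/mapP.
  move=> [/dvdnP[e ->]]; rewrite dvdn_pmul2r // => e_dvd_n.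
  by exists e; rewrite -?dvdn_divisors.
by move=> [e]; rewrite -dvdn_divisors // => e_dvd_n ->; rewrite dvdn_mull ?dvdn_mul.
Qed.

Section SquarefreeDivisorSum.

Variables (R : comPzSemiRingType) (w : R).

Let F d := (squarefree d)%:R * w ^+ omega d.

Lemma squarefree_weightMp p e : prime p -> (0 < e)%N ->
  F (e * p) = if (p %| e)%N then 0 else w * F e.
Proof.
move=> p_pr e_gt0; rewrite /F squarefreeMp //.
have [//|p_ndvd_e] := ifPn; first by rewrite mul0r.
by rewrite -(expn1 p) omegaM_pexp ?prime_coprime // exprS mulrCA.
Qed.

Lemma sum_squarefree_weightM_pexp p m k : prime p -> coprime p m -> (0 < k)%N ->
  \sum_(d <- divisors (m * p ^ k)) F d = (1 + w) * \sum_(d <- divisors m) F d.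
Proof.
move=> p_pr cop_pm k_gt0.
rewrite -(perm_big _ (permEl (perm_filterC (dvdn p) _))) big_cat /=.
rewrite addrC mulrDl mul1r (perm_big _ (perm_divisorsM_pexp_ndvd k p_pr cop_pm)).
congr (_ + _).
have p_gt0 := prime_gt0 p_pr; have m_gt0 := coprime_prime_gt0 p_pr cop_pm.
have mpk_gt0 : (0 < m * p ^ k.-1)%N by rewrite muln_gt0 m_gt0 expn_gt0 p_gt0.
rewrite -(prednK k_gt0) expnSr mulnA (perm_big _ (perm_divisorsMp_dvd p_gt0 mpk_gt0)).
rewrite big_map -(perm_big _ (perm_divisorsM_pexp_ndvd k.-1 p_pr cop_pm)).
rewrite big_filter mulr_sumr [RHS]big_mkcond; apply: eq_big_seq => e.
rewrite -dvdn_divisors // => /dvdn_gt0 e_gt0.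
by rewrite squarefree_weightMp ?e_gt0 //; case: (p %| e)%N.
Qed.

Lemma sum_squarefree_divisors n : (0 < n)%N ->
  \sum_(d <- divisors n) (squarefree d)%:R * w ^+ omega d = (1 + w) ^+ omega n.
Proof.
elim/ltn_ind: n => n IHn n_gt0.
have [n_gt1 | n_le1] := ltnP 1 n; last first.
  have -> : n = 1%N by apply/eqP; rewrite eqn_leq n_le1.
  have -> : divisors 1 = [:: 1%N] by [].
  by rewrite big_seq1 mul1r.
have p_pr := pdiv_prime n_gt1.
have [m cop_pm n_eq] := pfactor_coprime p_pr n_gt0.
have k_gt0 : (0 < logn (pdiv n) n)%N.
  by rewrite logn_gt0 mem_primes p_pr n_gt0 pdiv_dvd.
have m_lt_n : (m < n)%N.
  rewrite [X in (_ < X)%N]n_eq -[X in (X < _)%N]muln1 ltn_pmul2l.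
    by rewrite -(expn0 (pdiv n)) ltn_exp2l ?prime_gt1.
  exact: coprime_prime_gt0 p_pr cop_pm.
rewrite n_eq sum_squarefree_weightM_pexp // IHn ?(coprime_prime_gt0 p_pr) //.
by rewrite omegaM_pexp // exprS.
Qed.

End SquarefreeDivisorSum.

Lemma primes_gcdn_idl n m : (0 < n)%N -> {subset primes n <= primes m} ->
  primes (gcdn n m) = primes n.
Proof.
move=> n_gt0 n_sub_m; apply/eq_primes => q.
rewrite !mem_primes gcdn_gt0 n_gt0 dvdn_gcd /=.
apply/and3P/andP => [[] // | [q_pr q_dvd_n]]; split=> //.
have /n_sub_m : q \in primes n by rewrite mem_primes q_pr n_gt0.
by rewrite mem_primes => /and3P[].
Qed.

Lemma norm_exprB_le2 (C : numDomainType) (z : C) i j : `|z| <= 1 ->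
  `|z ^+ i - z ^+ j| <= 2.
Proof.
move=> z_le1; apply: le_trans (ler_normB _ _) _; rewrite !normrX.
by rewrite -[2]/(1 + 1) lerD // exprn_ile1.
Qed.

Lemma Qxi_gt0 (R : realType) (xi : R) : (0 < Qxi xi)%N.
Proof.
rewrite /Qxi big_seq; apply: (big_ind (fun n => 0 < n)%N) => // [u v|k].
  by rewrite lcmn_gt0 => -> ->.
by rewrite mem_index_iota => /andP[].
Qed.

Lemma dvdn_Qxi (R : realType) (xi : R) q : (0 < q)%N -> q%:R <= xi -> (q %| Qxi xi)%N.
Proof.
move=> q_gt0 q_le_xi; have xi_ge0 : 0 <= xi by apply: le_trans q_le_xi.
rewrite /Qxi (big_rem q) ?dvdn_lcml //.
by rewrite mem_index_iota q_gt0 ltnS truncn_ge_nat.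
Qed.

Lemma intr_mobius_sqr (C : pzRingType) l :
  ((mobius l ^+ 2)%:~R : C) = (squarefree l)%:R.
Proof. by rewrite /mobius; case: (squarefree l); rewrite ?sqrr_sign ?expr0n. Qed.

Lemma sum_mobius_sqr_divisors_dvd (C : comPzRingType) (w : C) n m :
  (0 < n)%N -> (0 < m)%N ->
  \sum_(l <- divisors m) (mobius l ^+ 2)%:~R * w ^+ omega l * (l %| n)%:R =
    (1 + w) ^+ omega (gcdn n m).
Proof.
move=> n_gt0 m_gt0; have nm_gt0 : (0 < gcdn n m)%N by rewrite gcdn_gt0 n_gt0.
have divisors_gcdn : perm_eq [seq l <- divisors m | (l %| n)%N] (divisors (gcdn n m)).
  apply: uniq_perm; rewrite ?filter_uniq ?divisors_uniq // => l.
  by rewrite mem_filter -!dvdn_divisors // dvdn_gcd andbC.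
rewrite -sum_squarefree_divisors // -(perm_big _ divisors_gcdn).
rewrite big_filter [RHS]big_mkcond.
by apply: eq_bigr => l _; rewrite intr_mobius_sqr; case: ifP; rewrite ?mulr1 ?mulr0.
Qed.

Lemma norm_omega_gcdn_Qxi_le (R : realType) (xi x : R) (z : R[i]) n :
  `|z| <= 1 -> (0 < n)%N -> n%:R <= x ->
  `|z ^+ omega n - z ^+ omega (gcdn n (Qxi xi))| <=
    (2 * \sum_(q < (Num.truncn x).+1 | [&& prime q, xi < q%:R & q%:R <= x])
           ((q %| n)%N : nat))%:R.
Proof.
move=> z_le1 n_gt0 n_le_x.
set E := (\sum_(q < _ | _) _)%N.
have [E_eq0 | E_gt0] := posnP E; last first.
  by apply: le_trans (norm_exprB_le2 _ _ z_le1) _; rewrite ler_nat leq_pmulr.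
suff -> : omega (gcdn n (Qxi xi)) = omega n by rewrite subrr normr0.
rewrite /omega primes_gcdn_idl // => q; rewrite mem_primes => /and3P[q_pr _ q_dvd_n].
rewrite mem_primes q_pr Qxi_gt0; apply: dvdn_Qxi (prime_gt0 q_pr) _.
rewrite leNgt; apply/negP => xi_lt_q.
have q_le_x : q%:R <= x by apply: le_trans n_le_x; rewrite ler_nat dvdn_leq.
have q_lt_N : (q < (Num.truncn x).+1)%N.
  by rewrite ltnS truncn_ge_nat // (le_trans _ q_le_x).
move: E_eq0; rewrite /E (bigD1 (Ordinal q_lt_N)) /=; first by rewrite q_dvd_n.
by rewrite q_pr xi_lt_q q_le_x.
Qed.

Section PrimeSums.

Variables (R : realType) (xi x : R) (a : rat).

Lemma cntE l : cnt x a l =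
  \sum_(p < (Num.truncn x).+1 | [&& prime p, p%:R <= x & nu p a == 0])
    ((l %| idx p a)%N : nat).
Proof.
rewrite /cnt big_mkcond [RHS]big_mkcond; apply: eq_bigr => p _ /=.
by rewrite !andbA; case: (prime p && _ && _); case: (l %| idx p a)%N.
Qed.

Lemma mainterm_sum_primes (z : R[i]) : a != 0 ->
  mainterm xi x a z =
  \sum_(p < (Num.truncn x).+1 | [&& prime p, p%:R <= x & nu p a == 0])
    z ^+ omega (gcdn (idx p a) (Qxi xi)).
Proof.
move=> a_neq0; rewrite /mainterm.
under eq_bigr do rewrite cntE natr_sum mulr_sumr.
rewrite exchange_big; apply: eq_bigr => p /and3P[p_pr _ /eqP nu_eq0].
have /andP[idx_gt0 _] := idx_bounds p_pr a_neq0 nu_eq0.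
by rewrite sum_mobius_sqr_divisors_dvd ?Qxi_gt0 // addrC subrK.
Qed.

Lemma errterm_sum_primes : errterm xi x a =
  \sum_(p < (Num.truncn x).+1 | [&& prime p, p%:R <= x & nu p a == 0])
  \sum_(q < (Num.truncn x).+1 | [&& prime q, xi < q%:R & q%:R <= x])
    ((q %| idx p a)%N : nat).
Proof. by rewrite /errterm; under eq_bigr do rewrite cntE; exact: exchange_big. Qed.

End PrimeSums.

Theorem proposition2p3 :
  exists K : nat, forall (R : realType) (a : rat) (z : R[i]) (xi x : R),
    a != -1 -> a != 0 -> a != 1 ->
    `|z| <= 1 ->
    0 < xi -> xi < x ->
    `| lhs x a z - mainterm xi x a z | <= (K * errterm xi x a)%:R.
Proof.
exists 2%N => R a z xi x _ a_neq0 _ z_le1 _ _.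
rewrite mainterm_sum_primes // errterm_sum_primes /lhs -sumrB big_distrr natr_sum.
apply: le_trans (ler_norm_sum _ _ _) _.
apply: ler_sum => p /and3P[p_pr p_le_x /eqP nu_eq0].
have /andP[idx_gt0 idx_lt_p] := idx_bounds p_pr a_neq0 nu_eq0.
apply: norm_omega_gcdn_Qxi_le => //.
by apply: le_trans p_le_x; rewrite ler_nat ltnW.
Qed.
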